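(* $\{M^{(1)}_n\}$ and $\{M^{(2)}_n\}$ are martingale difference sequences with respect to the increasing $\sigma$-fields $\mathcal F_n:=\sigma(x_m,y_m,M^{(1)}_{m},M^{(2)}_{m},m\le n)$, $n\ge0$, and there exist constants $K^{(1)},K^{(2)}>0$ such that for all $n\ge0$: $\mathbb E[\|M^{(1)}_{n+1}\|_2^2\mid\mathcal F_n]\le K^{(1)}(1+\|x_n\|_2^2+\|y_n\|_2^2)$ and $\mathbb E[\|M^{(2)}_{n+1}\|_2^2\mid\mathcal F_n]\le K^{(2)}(1+\|x_n\|_2^2+\|y_n\|_2^2)$.
   Context: $\mathcal S,\mathcal A$ finite, $P$ a transition kernel, $r$ a reward with $|r|\le\bar r$, $T\ge1$, $\Omega=\mathcal S$, $\mathcal S^{\mathrm{de}}=\{0,\dots,T-1\}$ with cyclic deterministic kernel $P^{\mathrm{de}}$, $\mathcal S^{\mathrm h}=\mathcal S$, $\mathcal S^{\mathrm l}=\mathcal S\times\Omega\times\mathcal S^{\mathrm{de}}$, bounded $r^{\mathrm l}$, $\gamma^{\mathrm h},\gamma^{\mathrm l}\in(0,1)$. High-level kernel $P^{\mathrm h}_{\pi^{\mathrm l}}(s'|s,\omega)=\sum_{s_1..s_{T-1},a_0..a_{T-1}}\prod_{i=1}^TP(s_i|s_{i-1},a_{i-1})\pi^{\mathrm l}(a_{i-1}|(s_{i-1},\omega,i-1))$ ($s_0=s,s_T=s'$), high-level reward $r^{\mathrm h}_{\pi^{\mathrm l}}(s,\omega)=\mathbb E[\sum_{k=0}^{T-1}(\gamma^{\mathrm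 h})^kr(s_k,a_k)|s_0=s]$ with $a_k\sim\pi^{\mathrm l}(\cdot|(s_k,\omega,k))$; low-level kernel $P^{\mathrm l}_{\pi^{\mathrm h}}((s',\omega',d')|(s,\omega,d),a)=P^{\mathrm{de}}(d'|d)P(s'|s,a)q$, $q=0$ if $d\ne T-1,\omega'\ne\omega$; $q=1$ if $d\ne T-1,\omega'=\omega$; $q=\pi^{\mathrm h}(\omega'|s)$ if $d=T-1$. Feudal Q-learning iterates $Q^{\mathrm h,n}$, $Q^{\mathrm l,n}$ are written as $y_n=\mathrm{vec}(Q^{\mathrm h,n})$, $x_n=\mathrm{vec}(Q^{\mathrm l,n})$ and updated from on-policy samples generated with $\pi^{\mathrm h}=\pi^{\mathrm h,n}$, $\pi^{\mathrm l}=\pi^{\mathrm l,n}$ (policies determined by the current iterates). The noise terms are vectors with components $M^{(1)}_{n+1,s^{\mathrm l},a}=\gamma^{\mathrm l}\max_{a'}Q^{\mathrm l,n}(s^{\mathrm l}_{k+1},a')-\gamma^{\mathrm l}\mathbb E_{s^{\mathrm l,+}\sim P^{\mathrm l}_{\pi^{\mathrm h}}(\cdot|s^{\mathrm l},a)}[\max_{a^+}Q^{\mathrm l,n}(s^{\mathrm l,+},a^+)]$, with $s^{\mathrm l}_{k+1}\sim P^{\mathrm l}_{\pi^{\mathrm h}}(\cdot|s^{\mathrm l},a)$, and $M^{(2)}_{n+1,s^{\mathrm h},\omega}=(\gamma^{\mathrm h})^T\max_{\omega'}Q^{\mathrm h,n}(s^{\mathrm h}_{t+1},\omega')-(\gamma^{\mathrm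 h})^T\mathbb E_{s^{\mathrm h,+}\sim P^{\mathrm h}_{\pi^{\mathrm l}}(\cdot|s^{\mathrm h},\omega)}[\max_{\omega^+}Q^{\mathrm h,n}(s^{\mathrm h,+},\omega^+)]+\sum_{k=0}^{T-1}(\gamma^{\mathrm h})^kr(s_{tT+k},a_{tT+k})-r^{\mathrm h}_{\pi^{\mathrm l}}(s^{\mathrm h},\omega)$, where the sampled segment starts at $s_{tT}=s^{\mathrm h}$ with goal $\omega$, $a_{tT+k}\sim\pi^{\mathrm l}(\cdot|s^{\mathrm l}_{tT+k})$, $s^{\mathrm l}_{tT+k+1}\sim P^{\mathrm l}_{\pi^{\mathrm h}}(\cdot|s^{\mathrm l}_{tT+k},a_{tT+k})$, and $s^{\mathrm h}_{t+1}=s_{(t+1)T}$. *)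

From HB Require Import structures.
From mathcomp Require Import all_boot all_order all_algebra.
From mathcomp Require Import all_classical all_reals all_analysis.
Set Implicit Arguments. Unset Strict Implicit. Unset Printing Implicit Defensive.
Import Order.TTheory GRing.Theory Num.Theory.
Local Open Scope classical_set_scope.
Local Open Scope ring_scope.

Definition maxQ {R : realType} {X B : finType} (Q : X -> B -> R) (x : X) : R :=
  match enum B with
  | [::] => 0
  | b :: _ => \big[Num.max/Q x b]_(b' : B) Q x b'
  end.

(* Low-level state space  S^l = S x Omega x S^de, with Omega = S, S^de = 'I_T *)
Definition SL (S : finType) (T : nat) : finType := (S * S * 'I_T)%type.

Definition Pde {R : realType} (T : nat) (d d' : 'I_T) : R :=
  ((d' : nat) == (d.+1 %% T)%N)%:R.

(* low-level kernel P^l_{pi^h}((s',w',d') | (s,w,d), a);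
   pih s w' = pi^h(w' | s) *)
Definition Pl {R : realType} {S A : finType} (T : nat)
  (P : S -> A -> S -> R) (pih : S -> S -> R)
  (x : SL S T) (a : A) (y : SL S T) : R :=
  let: (s, w, d) := x in
  let: (s', w', d') := y in
  Pde d d' * P s a s' *
  (if (d : nat) != T.-1 then (w' == w)%:R else pih s w').

Definition seg_weight {R : realType} {S A : finType} (T : nat)
  (P : S -> A -> S -> R) (pil : SL S T -> A -> R) (s w : S)
  (st : {ffun 'I_T.+1 -> S}) (ac : {ffun 'I_T -> A}) : R :=
  (st ord0 == s)%:R *
  \prod_(i < T) (P (st (inord i)) (ac i) (st (inord i.+1)) *
                 pil (st (inord i), w, i) (ac i)).

Definition seg_reward {R : realType} {S A : finType} (T : nat)
  (r : S -> A -> R) (gh : R)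
  (st : {ffun 'I_T.+1 -> S}) (ac : {ffun 'I_T -> A}) : R :=
  \sum_(k < T) gh ^+ k * r (st (inord k)) (ac k).

Definition Ph {R : realType} {S A : finType} (T : nat)
  (P : S -> A -> S -> R) (pil : SL S T -> A -> R) (s w s' : S) : R :=
  \sum_(st : {ffun 'I_T.+1 -> S}) \sum_(ac : {ffun 'I_T -> A})
    seg_weight P pil s w st ac * (st (inord T) == s')%:R.

Definition rh {R : realType} {S A : finType} (T : nat)
  (P : S -> A -> S -> R) (r : S -> A -> R) (gh : R)
  (pil : SL S T -> A -> R) (s w : S) : R :=
  \sum_(st : {ffun 'I_T.+1 -> S}) \sum_(ac : {ffun 'I_T -> A})
    seg_weight P pil s w st ac * seg_reward r gh st ac.

(* Noise terms (M_0 := 0; M_{n+1} built from the step-(n+1) samples)    *)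

Definition M1 {R : realType} {T0 : Type} {S A : finType} (T : nat)
  (P : S -> A -> S -> R) (gl : R)
  (Ql : nat -> T0 -> SL S T -> A -> R)
  (pih : nat -> T0 -> S -> S -> R)
  (nxt : nat -> SL S T -> A -> T0 -> SL S T)
  (n : nat) (i : SL S T * A) (om : T0) : R :=
  match n with
  | 0 => 0
  | n'.+1 =>
    let: (sl, a) := i in
    gl * maxQ (Ql n' om) (nxt n' sl a om)
    - gl * \sum_(y : SL S T) Pl P (pih n' om) sl a y * maxQ (Ql n' om) y
  end.

Definition M2 {R : realType} {T0 : Type} {S A : finType} (T : nat)
  (P : S -> A -> S -> R) (r : S -> A -> R) (gh : R)
  (Qh : nat -> T0 -> S -> S -> R)
  (pil : nat -> T0 -> SL S T -> A -> R)
  (segS : nat -> S -> S -> T0 -> {ffun 'I_T.+1 -> S})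
  (segA : nat -> S -> S -> T0 -> {ffun 'I_T -> A})
  (n : nat) (i : S * S) (om : T0) : R :=
  match n with
  | 0 => 0
  | n'.+1 =>
    let: (s, w) := i in
    gh ^+ T * maxQ (Qh n' om) (segS n' s w om (inord T))
    - gh ^+ T * \sum_(s' : S) Ph P (pil n' om) s w s' * maxQ (Qh n' om) s'
    + seg_reward r gh (segS n' s w om) (segA n' s w om)
    - rh P r gh (pil n' om) s w
  end.

Definition gen_sigma {R : realType} {d} {T0 : measurableType d} {I : Type}
  (X : I -> T0 -> R) : set (set T0) :=
  <<s [set E | exists i B, measurable B /\ E = X i @^-1` B] >>.

Definition meas_wrt {R : realType} {T0 : Type} (G : set (set T0))
  (X : T0 -> R) : Prop :=
  forall B : set R, measurable B -> G (X @^-1` B).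

(* iterates x_n = vec(Q^{l,n}) and y_n = vec(Q^{h,n}) as a family of
   components indexed by (S^l x A) + (S x Omega) *)
Definition xy_comp {R : realType} {T0 : Type} {S A : finType} {T : nat}
  (Ql : T0 -> SL S T -> A -> R) (Qh : T0 -> S -> S -> R)
  (i : (SL S T * A) + (S * S)) (om : T0) : R :=
  match i with
  | inl (sl, a) => Ql om sl a
  | inr (s, w) => Qh om s w
  end.

Definition filtF {R : realType} {d} {T0 : measurableType d} {S A : finType}
  {T : nat}
  (Ql : nat -> T0 -> SL S T -> A -> R) (Qh : nat -> T0 -> S -> S -> R)
  (M1n : nat -> SL S T * A -> T0 -> R) (M2n : nat -> S * S -> T0 -> R)
  (n : nat) : set (set T0) :=
  gen_sigma (fun (j : 'I_n.+1 * (((SL S T * A) + (S * S)) +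
                                  ((SL S T * A) + (S * S)))) =>
    match j.2 with
    | inl i => xy_comp (Ql j.1) (Qh j.1) i
    | inr (inl i) => M1n j.1 i
    | inr (inr i) => M2n j.1 i
    end).

(* E[X | G] = 0 (X integrable, int_B X dP = 0 for all B in G) *)
Definition cond_mean_zero {R : realType} {d} {T0 : measurableType d}
  (Pr : probability T0 R) (G : set (set T0)) (X : T0 -> R) : Prop :=
  Pr.-integrable setT (fun om => (X om)%:E) /\
  forall B, G B -> (\int[Pr]_(om in B) (X om)%:E = 0)%E.

Definition mart_diff {R : realType} {d} {T0 : measurableType d}
  (Pr : probability T0 R) (F : nat -> set (set T0)) (M : nat -> T0 -> R)
  : Prop :=
  forall n, meas_wrt (F n) (M n) /\ cond_mean_zero Pr (F n) (M n.+1).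

(* E[ X | G ] <= E[ Y | G ] for nonnegative X, Y, i.e.
   int_B X dP <= int_B Y dP for every B in G *)
Definition cond_le {R : realType} {d} {T0 : measurableType d}
  (Pr : probability T0 R) (G : set (set T0)) (X Y : T0 -> R) : Prop :=
  forall B, G B ->
    (\int[Pr]_(om in B) (X om)%:E <= \int[Pr]_(om in B) (Y om)%:E)%E.

From HB Require Import structures.
From mathcomp Require Import all_boot all_order all_algebra.
From mathcomp Require Import all_classical all_reals all_analysis.
From mathcomp Require Import measurable_realfun ring lra.
Import Order.TTheory GRing.Theory Num.Theory.
Import HBNNSimple.
Local Open Scope classical_set_scope.
Local Open Scope ring_scope.

(* Both noise terms are centred samples [sum_k (1[X = k] - p k) * f k]: [X] is the
   sample drawn at step n+1 (the next low-level state, resp. the next T-step segment),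
   [p] is its conditional law given the sampling history [G n], and the values [f]
   (a discounted max of Q-entries, plus the segment reward for M^(2)) are
   [G n]-measurable.  As [p k] and [1[X = k]] have the same integral over every set of
   [G n], the [G n]-measurable factor [f k] can be pulled out, so each component has
   conditional mean zero given [G n], hence given the smaller [F n].  For the second
   moments, [|1[X = k] - p k| <= 1] and Cauchy-Schwarz give [M^2 <= #|K| sum_k f k^2],
   and [(max_b Q x b)^2] is at most the squared norm of [Q], while the segment reward
   is bounded by [T * rbar]. *)

Lemma ler_term_sum {R : numDomainType} {I : finType} (F : I -> R) (i : I) :
  (forall j, 0 <= F j) -> F i <= \sum_j F j.
Proof. by move=> F0; rewrite (bigD1 i) //= lerDl sumr_ge0. Qed.

Lemma sqr_sum_le {R : realDomainType} {I : finType} (F : I -> R) :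
  (\sum_i F i) ^+ 2 <= #|I|%:R * \sum_i F i ^+ 2.
Proof.
have sqr_sumE : (\sum_i F i) ^+ 2 = \sum_i \sum_j F i * F j.
  by rewrite expr2 mulr_suml; apply: eq_bigr => i _; rewrite mulr_sumr.
have sum_sqrE : \sum_i \sum_j (F i ^+ 2 + F j ^+ 2) = 2 * (#|I|%:R * \sum_i F i ^+ 2).
  under eq_bigr do rewrite big_split /= sumr_const -mulr_natl.
  rewrite big_split /= -mulr_sumr sumr_const -mulr_natl; ring.
have sum_sqrBE : \sum_i \sum_j (F i - F j) ^+ 2 =
    \sum_i \sum_j (F i ^+ 2 + F j ^+ 2) - 2 * \sum_i \sum_j F i * F j.
  rewrite mulr_sumr -sumrB; apply: eq_bigr => i _.
  by rewrite mulr_sumr -sumrB; apply: eq_bigr => j _; rewrite sqrrB; ring.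
have : 0 <= \sum_i \sum_j (F i - F j) ^+ 2.
  by do 2!apply: sumr_ge0 => ? _; exact: sqr_ge0.
rewrite sum_sqrBE sum_sqrE -sqr_sumE; lra.
Qed.

Lemma sum2_sqr_ge0 {R : realDomainType} {I J : finType} (F : I -> J -> R) :
  0 <= \sum_i \sum_j F i j ^+ 2.
Proof. by do 2!(apply: sumr_ge0 => ? _); exact: sqr_ge0. Qed.

Lemma normr_natb_subr_le1 {R : realDomainType} (b : bool) (x : R) :
  0 <= x <= 1 -> `|b%:R - x| <= 1.
Proof.
case/andP=> x0 x1; case: b => /=; last by rewrite sub0r normrN ger0_norm.
by rewrite ger0_norm ?subr_ge0 // lerBlDr lerDl.
Qed.

Lemma mulr_ge0_le1 {R : numDomainType} (x y : R) :
  0 <= x <= 1 -> 0 <= y <= 1 -> 0 <= x * y <= 1.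
Proof. by move=> /andP[x0 x1] /andP[y0 y1]; rewrite mulr_ge0 // mulr_ile1. Qed.

Lemma natb_ge0_le1 {R : numDomainType} (b : bool) : 0 <= (b%:R : R) <= 1.
Proof. by case: b; rewrite /= ?lexx ?ler01. Qed.

Lemma sum_pred1_natrM {R : pzSemiRingType} {K : finType} (x : K) (F : K -> R) :
  \sum_(y : K) (x == y)%:R * F y = F x.
Proof.
rewrite (bigD1 x) //= eqxx mul1r big1 ?addr0 // => y /negbTE.
by rewrite eq_sym => ->; rewrite mul0r.
Qed.

Lemma eqb_indicE {T0 : Type} {R : realType} {K : eqType} (X : T0 -> K) (k : K) (x : T0) :
  (X x == k)%:R = \1_[set x | X x = k] x :> R.
Proof.
rewrite indicE.
by case: (eqVneq (X x) k) => [Xxk|/eqP Xxk]; [rewrite mem_set | rewrite memNset].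
Qed.

Lemma set_pair_eqE {T0 U W : Type} (f : T0 -> U) (g : T0 -> W) (u : U) (w : W) :
  [set om | (f om, g om) = (u, w)] = [set om | f om = u /\ g om = w].
Proof. by apply/seteqP; split=> om /= [-> ->]. Qed.

Definition centered_sample {T0 : Type} {R : pzRingType} {K : finType}
    (X : T0 -> K) (p f : T0 -> K -> R) (om : T0) : R :=
  \sum_(k : K) ((X om == k)%:R - p om k) * f om k.

Lemma sqr_centered_sample_le {T0 : Type} {R : realDomainType} {K : finType}
    (X : T0 -> K) (p f : T0 -> K -> R) (c v : R) (om : T0) :
  (forall k, 0 <= p om k <= 1) -> (forall k, f om k ^+ 2 <= c * v) ->
  centered_sample X p f om ^+ 2 <= (#|K| ^ 2)%:R * c * v.
Proof.
move=> p01 fle.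
have sum_le : \sum_k (((X om == k)%:R - p om k) * f om k) ^+ 2 <= \sum_(k : K) c * v.
  apply: ler_sum => k _; rewrite exprMn; apply: le_trans (fle k).
  by rewrite ler_piMl ?sqr_ge0 // -(real_normK (num_real _)) expr_le1 ?normr_natb_subr_le1.
apply: (le_trans (sqr_sum_le _)); rewrite natrX expr2 -!mulrA ler_wpM2l //.
by rewrite mulr_natl -sumr_const.
Qed.

Lemma centered_sampleE {T0 : Type} {R : pzRingType} {K : finType}
    (X : T0 -> K) (p f : T0 -> K -> R) (om : T0) :
  centered_sample X p f om = f om (X om) - \sum_k p om k * f om k.
Proof.
rewrite /centered_sample; under eq_bigr do rewrite mulrBl.
by rewrite sumrB sum_pred1_natrM.
Qed.

Section meas_wrt.
Context {R : realType} {d : measure_display} {T0 : measurableType d}.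
Context {H : set (set T0)}.
Hypothesis sigmaH : sigma_algebra setT H.
Local Notation HT := (g_sigma_algebraType H).

Lemma g_sigma_measurableE (C : set T0) : measurable (C : set HT) = H C.
Proof. by rewrite /measurable /= sigma_algebra_id. Qed.

Lemma meas_wrtP {f : T0 -> R} :
  meas_wrt H f <-> measurable_fun setT (f : HT -> R).
Proof.
split=> [mf _ B mB|mf B mB]; first by rewrite setTI g_sigma_measurableE; exact: mf.
by rewrite -g_sigma_measurableE -(setTI (f @^-1` B)); exact: mf.
Qed.

Lemma meas_wrt_cst (c : R) : meas_wrt H (fun=> c).
Proof. exact/meas_wrtP/measurable_cst. Qed.

Lemma meas_wrtD (f g : T0 -> R) :
  meas_wrt H f -> meas_wrt H g -> meas_wrt H (fun x => f x + g x).
Proof. by move=> /meas_wrtP mf /meas_wrtP mg; exact/meas_wrtP/measurable_funD. Qed.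

Lemma meas_wrtB (f g : T0 -> R) :
  meas_wrt H f -> meas_wrt H g -> meas_wrt H (fun x => f x - g x).
Proof. by move=> /meas_wrtP mf /meas_wrtP mg; exact/meas_wrtP/measurable_funB. Qed.

Lemma meas_wrtM (f g : T0 -> R) :
  meas_wrt H f -> meas_wrt H g -> meas_wrt H (fun x => f x * g x).
Proof. by move=> /meas_wrtP mf /meas_wrtP mg; exact/meas_wrtP/measurable_funM. Qed.

Lemma meas_wrt_sum {I : Type} (s : seq I) (F : I -> T0 -> R) :
  (forall i, meas_wrt H (F i)) -> meas_wrt H (fun x => \sum_(i <- s) F i x).
Proof. by move=> mF; apply/meas_wrtP/measurable_sum => i; exact/meas_wrtP. Qed.

Lemma meas_wrt_prod {I : eqType} (s : seq I) (F : I -> T0 -> R) :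
  (forall i, meas_wrt H (F i)) -> meas_wrt H (fun x => \prod_(i <- s) F i x).
Proof. by move=> mF; apply/meas_wrtP/measurable_prod => i _; exact/meas_wrtP. Qed.

Lemma meas_wrt_eq_indic {K : eqType} (X : T0 -> K) (k : K) :
  H [set x | X x = k] -> meas_wrt H (fun x => (X x == k)%:R : R).
Proof.
move=> HXk; apply/meas_wrtP.
under eq_fun do rewrite eqb_indicE.
by apply: measurable_indic; rewrite g_sigma_measurableE.
Qed.

Lemma meas_wrt_maxQ {X B : finType} (Q : T0 -> X -> B -> R) (x : X) :
  (forall b, meas_wrt H (fun om => Q om x b)) -> meas_wrt H (fun om => maxQ (Q om) x).
Proof.
move=> mQ; apply/meas_wrtP; rewrite /maxQ.
case: (enum B) => [|b0 _]; first exact: measurable_cst.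
elim: (index_enum B) => [|b s IH]; first by under eq_fun do rewrite big_nil; exact/meas_wrtP.
by under eq_fun do rewrite big_cons; apply: measurable_maxr => //; exact/meas_wrtP.
Qed.

End meas_wrt.

Lemma meas_wrtS {R : realType} {T0 : Type} {H H' : set (set T0)} {f : T0 -> R} :
  H `<=` H' -> meas_wrt H f -> meas_wrt H' f.
Proof. by move=> HH' mf B mB; apply: HH'; exact: mf. Qed.

Lemma meas_wrt_measurable_fun {R : realType} {d} {T0 : measurableType d}
    {H : set (set T0)} {f : T0 -> R} :
  H `<=` measurable -> meas_wrt H f -> measurable_fun setT f.
Proof. by move=> Hm mf _ B mB; rewrite setTI; apply: Hm; exact: mf. Qed.

Lemma meas_wrt_gen_sigma {R : realType} {d} {T0 : measurableType d} {I : Type}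
    (X : I -> T0 -> R) (i : I) :
  meas_wrt (gen_sigma X) (X i).
Proof. by move=> B mB; apply: sub_gen_smallest; exists i, B. Qed.

Lemma gen_sigma_sub {R : realType} {d} {T0 : measurableType d} {I : Type}
    {X : I -> T0 -> R} {H : set (set T0)} :
  sigma_algebra setT H -> (forall i, meas_wrt H (X i)) -> gen_sigma X `<=` H.
Proof. by move=> sigmaH mX; apply: smallest_sub => // E [i [B [mB ->]]]; exact: mX. Qed.

(* Equal integrals of [h1] and [h2] over the sets of [H] extend to [h1 * f] and
   [h2 * f] for [H]-measurable [f]: first for simple [f], then by monotone
   convergence, then by splitting [f] into its positive and negative parts. *)
Section pull_out.
Context {R : realType} {d : measure_display} {T0 : measurableType d}.
Context {Pr : probability T0 R} {H : set (set T0)}.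
Hypotheses (sigmaH : sigma_algebra setT H) (subH : H `<=` measurable).
Local Notation HT := (g_sigma_algebraType H).
Context {h1 h2 : T0 -> R}.
Hypotheses (mh1 : measurable_fun setT h1) (mh2 : measurable_fun setT h2).
Hypotheses (h1_ge0 : forall x, 0 <= h1 x) (h2_ge0 : forall x, 0 <= h2 x).
Hypothesis h12_int : forall C, H C ->
  (\int[Pr]_(x in C) (h1 x)%:E = \int[Pr]_(x in C) (h2 x)%:E)%E.
Context {B : set T0}.
Hypothesis HB : H B.

Let mB : measurable B. Proof. exact: subH. Qed.

Let measurable_funHT (f : T0 -> R) :
  measurable_fun setT (f : HT -> R) -> measurable_fun setT f.
Proof. by move=> /(meas_wrtP sigmaH); exact: meas_wrt_measurable_fun. Qed.

Let integral_mul_indic (h : T0 -> R) (C : set T0) :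
  (\int[Pr]_(x in B) (h x * \1_C x)%:E = \int[Pr]_(x in B `&` C) (h x)%:E)%E.
Proof.
rewrite [LHS]integral_mkcond [RHS]integral_mkcond; apply: eq_integral => x _.
rewrite !patchE indicE in_setI.
by case: (x \in B); case: (x \in C); rewrite /= ?mulr1 ?mulr0.
Qed.

Lemma integral_mul_nnsfun (s : {nnsfun HT >-> R}) :
  (\int[Pr]_(x in B) (h1 x * s x)%:E = \int[Pr]_(x in B) (h2 x * s x)%:E)%E.
Proof.
have mpre y : measurable ((s : HT -> R) @^-1` [set y] : set T0).
  by apply: subH; rewrite -(g_sigma_measurableE sigmaH); exact: measurable_funPTI.
have sE (h : T0 -> R) : (fun x => (h x * s x)%:E) = (fun x =>
    \sum_(y <- finmap.enum_fset (fset_set (range s)))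
      (Num.max y 0 * (h x * \1_((s : HT -> R) @^-1` [set y]) x))%:E)%E.
  apply/funext => x; rewrite sumEFin; congr EFin.
  rewrite [in LHS](fimfunE s x) fsbig_finite // mulr_sumr big_seq [RHS]big_seq.
  apply: eq_bigr => y; rewrite in_fset_set // inE => -[z _ <-].
  by rewrite mulrCA (max_l (fun_ge0 _)).
have intE (h : T0 -> R) : measurable_fun setT h -> (forall x, 0 <= h x) ->
    (\int[Pr]_(x in B) (h x * s x)%:E =
     \sum_(y <- finmap.enum_fset (fset_set (range s)))
       (Num.max y 0)%:E * \int[Pr]_(x in B `&` (s : HT -> R) @^-1` [set y]) (h x)%:E)%E.
  have max_ge0 (y : R) : 0 <= Num.max y 0 by rewrite le_max lexx orbT.
  have mh_indic y : measurable_fun setT h -> measurable_fun B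
      (fun x => h x * \1_((s : HT -> R) @^-1` [set y]) x).
    move=> mh; apply: measurable_funM; first exact: measurable_funTS.
    exact: measurable_indic.
  move=> mh h0; rewrite sE ge0_integral_sum //; last 2 first.
  - by move=> y; apply/measurable_EFinP/measurable_funM => //; exact: mh_indic.
  - by move=> y x _; rewrite lee_fin !mulr_ge0 // indicE.
  apply: eq_bigr => y _; under eq_integral do rewrite EFinM.
  rewrite ge0_integralZl_EFin // ?integral_mul_indic //.
  - by move=> x _; rewrite lee_fin mulr_ge0 // indicE.
  - exact/measurable_EFinP/mh_indic.
rewrite !intE //; apply: eq_bigr => y _; rewrite h12_int //.
rewrite -(g_sigma_measurableE sigmaH); apply: measurableI; last exact: measurable_funPTI.
by rewrite g_sigma_measurableE.
Qed.

Lemma integral_mul_ge0 {f : T0 -> R} : meas_wrt H f -> (forall x, 0 <= f x) ->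
  (\int[Pr]_(x in B) (h1 x * f x)%:E = \int[Pr]_(x in B) (h2 x * f x)%:E)%E.
Proof.
move=> /(meas_wrtP sigmaH) mf f0.
have mfE : measurable_fun setT (EFin \o f : HT -> \bar R) by exact/measurable_EFinP.
pose g := nnsfun_approx measurableT mfE.
have limE (h : T0 -> R) : measurable_fun setT h -> (forall x, 0 <= h x) ->
    (\int[Pr]_(x in B) (h x * f x)%:E =
     limn (fun n => \int[Pr]_(x in B) (h x * g n x)%:E))%E.
  move=> mh h0; rewrite -monotone_convergence //; last 3 first.
  - move=> n; apply/measurable_EFinP/measurable_funM; first exact: measurable_funTS.
    exact/measurable_funTS/measurable_funHT/measurable_funP.
  - by move=> n x _; rewrite lee_fin mulr_ge0.
  - move=> x _ m n mn; rewrite lee_fin ler_wpM2l //.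
    by move: (nd_nnsfun_approx measurableT mfE mn) => /lefP; exact.
  apply: eq_integral => x _; apply/esym/cvg_lim => //.
  under eq_fun do rewrite EFinM.
  rewrite EFinM; apply: cvgeZl => //.
  by apply: (cvg_nnsfun_approx measurableT mfE) => // y _; rewrite lee_fin.
by rewrite !limE //; congr (limn _); apply/funext => n; exact: integral_mul_nnsfun.
Qed.

Hypotheses (h1_le1 : forall x, h1 x <= 1) (h2_le1 : forall x, h2 x <= 1).

Let integrable_mul_dominated (h g f : T0 -> R) :
  measurable_fun setT h -> (forall x, 0 <= h x) -> (forall x, h x <= 1) ->
  measurable_fun setT g -> (forall x, `|g x| <= `|f x|) ->
  Pr.-integrable setT (EFin \o f) -> Pr.-integrable B (fun x => (h x * g x)%:E).
Proof.
move=> mh h0 hle1 mg gf intf.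
apply: (le_integrable mB _ _ (integrableS measurableT mB (subsetT B) intf)).
  by apply/measurable_EFinP/measurable_funM; exact: measurable_funTS.
move=> x _; rewrite /= lee_fin normrM (le_trans _ (gf x)) //.
by rewrite ler_piMl // ger0_norm.
Qed.

Lemma integral_mulBl_eq0 {f : T0 -> R} :
  meas_wrt H f -> Pr.-integrable setT (EFin \o f) ->
  (\int[Pr]_(x in B) ((h1 x - h2 x) * f x)%:E = 0)%E.
Proof.
move=> Hf intf; have mf := meas_wrt_measurable_fun subH Hf.
have Hfpos : meas_wrt H f^\+ by exact/(meas_wrtP sigmaH)/measurable_funrpos/(meas_wrtP sigmaH).
have Hfneg : meas_wrt H f^\- by exact/(meas_wrtP sigmaH)/measurable_funrneg/(meas_wrtP sigmaH).
have mfpos := meas_wrt_measurable_fun subH Hfpos.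
have mfneg := meas_wrt_measurable_fun subH Hfneg.
have fE x : f x = f^\+ x - f^\- x by rewrite -[in LHS](funrposBneg f).
have normfE x : f^\+ x + f^\- x = `|f x| by rewrite -[RHS]/((Num.norm \o f) x) -funrposDneg.
have fpos_le x : `|f^\+ x| <= `|f x|.
  by rewrite -normfE ger0_norm ?funrpos_ge0 // lerDl funrneg_ge0.
have fneg_le x : `|f^\- x| <= `|f x|.
  by rewrite -normfE ger0_norm ?funrneg_ge0 // lerDr funrpos_ge0.
have splitE (h : T0 -> R) :
    measurable_fun setT h -> (forall x, 0 <= h x) -> (forall x, h x <= 1) ->
    (\int[Pr]_(x in B) (h x * f x)%:E =
     \int[Pr]_(x in B) (h x * f^\+ x)%:E - \int[Pr]_(x in B) (h x * f^\- x)%:E)%E.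
  move=> mh h0 hle1; rewrite -integralB //; try exact: integrable_mul_dominated.
  by apply: eq_integral => x _; rewrite -EFinB -mulrBr -fE.
under eq_integral do rewrite mulrBl EFinB.
rewrite integralB //; try exact: integrable_mul_dominated.
rewrite splitE // (integral_mul_ge0 Hfpos (@funrpos_ge0 _ _ f)).
rewrite (integral_mul_ge0 Hfneg (@funrneg_ge0 _ _ f)) -splitE // subee //.
exact/integrable_fin_num/integrable_mul_dominated.
Qed.

End pull_out.

Lemma meas_wrt_centered_sample {R : realType} {d} {T0 : measurableType d}
    (H : set (set T0)) {K : finType} (X : T0 -> K) (p f : T0 -> K -> R) :
  sigma_algebra setT H -> (forall k, H [set om | X om = k]) ->
  (forall k, meas_wrt H (fun om => p om k)) -> (forall k, meas_wrt H (fun om => f om k)) ->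
  meas_wrt H (centered_sample X p f).
Proof.
move=> sigmaH HX Hp Hf; apply: meas_wrt_sum => // k.
by apply: meas_wrtM => //; apply: meas_wrtB => //; exact: meas_wrt_eq_indic.
Qed.

Lemma cond_mean_zeroS {R : realType} {d} {T0 : measurableType d}
    (Pr : probability T0 R) (H H' : set (set T0)) (X : T0 -> R) :
  H `<=` H' -> cond_mean_zero Pr H' X -> cond_mean_zero Pr H X.
Proof. by move=> HH' [intX X0]; split=> // B /HH'; exact: X0. Qed.

Lemma cond_le_of_le {R : realType} {d} {T0 : measurableType d}
    (Pr : probability T0 R) (H : set (set T0)) (X Y : T0 -> R) :
  H `<=` measurable -> measurable_fun setT X -> measurable_fun setT Y ->
  (forall x, 0 <= X x) -> (forall x, X x <= Y x) -> cond_le Pr H X Y.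
Proof.
move=> Hm mX mY X0 XY B /Hm mB; apply: ge0_le_integral => //.
- by move=> x _; rewrite lee_fin.
- exact/measurable_EFinP/measurable_funTS.
- exact/measurable_EFinP/measurable_funTS.
- by move=> x _; rewrite lee_fin.
Qed.

Section centered_sample_cond_mean.
Context {R : realType} {d : measure_display} {T0 : measurableType d}.
Context {Pr : probability T0 R} {H : set (set T0)}.
Hypotheses (sigmaH : sigma_algebra setT H) (subH : H `<=` measurable).
Context {K : finType} {X : T0 -> K} {p f : T0 -> K -> R}.
Hypothesis mX : forall k, measurable [set om | X om = k].
Hypothesis lawX : forall k C, H C ->
  Pr (C `&` [set om | X om = k]) = (\int[Pr]_(om in C) (p om k)%:E)%E.
Hypothesis Hp : forall k, meas_wrt H (fun om => p om k).
Hypothesis p01 : forall om k, 0 <= p om k <= 1.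
Hypothesis Hf : forall k, meas_wrt H (fun om => f om k).
Hypothesis intf : forall k, Pr.-integrable setT (fun om => (f om k)%:E).

Let measurable_indicator k : measurable_fun setT (fun om => (X om == k)%:R : R).
Proof. by under eq_fun do rewrite eqb_indicE; exact: measurable_indic. Qed.

Let integrable_term k D : measurable D ->
  Pr.-integrable D (fun om => (((X om == k)%:R - p om k) * f om k)%:E).
Proof.
move=> mD; apply: (le_integrable mD _ _ (integrableS measurableT mD (subsetT D) (intf k))).
  apply/measurable_EFinP/measurable_funTS/measurable_funM.
    by apply: measurable_funB => //; exact: meas_wrt_measurable_fun (Hp k).
  exact: meas_wrt_measurable_fun (Hf k).
move=> om _; rewrite lee_fin normrM ler_piMl //.
exact: normr_natb_subr_le1.
Qed.

Lemma centered_sample_cond_mean_zero : cond_mean_zero Pr H (centered_sample X p f).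
Proof.
rewrite /centered_sample; split.
  under eq_fun do rewrite -sumEFin.
  by apply: integrable_sum => // k _; exact: integrable_term.
move=> B HB; have mB : measurable B by exact: subH.
under eq_integral do rewrite -sumEFin.
rewrite integral_sum //; last by move=> k; exact: integrable_term.
apply: big1 => k _; apply: (integral_mulBl_eq0 sigmaH subH) => //.
- exact: meas_wrt_measurable_fun (Hp k).
- by move=> om; case/andP: (p01 om k).
- move=> C HC; under eq_integral do rewrite eqb_indicE.
  rewrite integral_indic; [|exact: subH|exact: mX].
  by rewrite setIC; exact: lawX.
- by move=> om; case: (X om == k); rewrite /= ?lexx ?ler01.
- by move=> om; case/andP: (p01 om k).
- exact: intf.
Qed.

End centered_sample_cond_mean.

Section maxQ.
Context {R : realType} {X B : finType}.
Implicit Types (Q : X -> B -> R) (x : X).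

Lemma maxQ_cases Q x : maxQ Q x = 0 \/ exists b, maxQ Q x = Q x b.
Proof.
rewrite /maxQ; case: (enum B) => [|b0 _]; [by left | right].
apply: (big_ind (fun v => exists b, v = Q x b)) => [|u v [b1 ->] [b2 ->]|b _].
- by exists b0.
- by case: (leP (Q x b1) (Q x b2)) => _; [exists b2 | exists b1].
- by exists b.
Qed.

Lemma maxQ_sqr_le Q x : maxQ Q x ^+ 2 <= \sum_b Q x b ^+ 2.
Proof.
have Q2_ge0 b : 0 <= Q x b ^+ 2 by exact: sqr_ge0.
case: (maxQ_cases Q x) => [->|[b ->]]; last exact: ler_term_sum.
by rewrite expr0n sumr_ge0.
Qed.

Lemma normr_maxQ_le Q x : `|maxQ Q x| <= \sum_b `|Q x b|.
Proof.
case: (maxQ_cases Q x) => [->|[b ->]]; last exact: ler_term_sum.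
by rewrite normr0 sumr_ge0.
Qed.

Lemma maxQ_sqr_le_sum2 Q x : maxQ Q x ^+ 2 <= \sum_x' \sum_b Q x' b ^+ 2.
Proof.
apply: le_trans (maxQ_sqr_le Q x) _; apply: (ler_term_sum (fun x' => \sum_b Q x' b ^+ 2)).
by move=> x'; apply: sumr_ge0 => b _; exact: sqr_ge0.
Qed.

End maxQ.

Lemma integrable_maxQ {R : realType} {d} {T0 : measurableType d}
    (Pr : probability T0 R) (H : set (set T0)) {X B : finType}
    (Q : T0 -> X -> B -> R) (x : X) :
  sigma_algebra setT H -> H `<=` measurable ->
  (forall b, meas_wrt H (fun om => Q om x b)) ->
  (forall b, Pr.-integrable setT (fun om => (Q om x b)%:E)) ->
  Pr.-integrable setT (fun om => (maxQ (Q om) x)%:E).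
Proof.
move=> sigmaH subH HQ intQ.
apply: (le_integrable measurableT _ _ (g := fun om => (\sum_b `|Q om x b|)%:E)).
- by apply/measurable_EFinP/(meas_wrt_measurable_fun subH); exact: meas_wrt_maxQ.
- move=> om _ /=; rewrite lee_fin (le_trans (normr_maxQ_le _ _)) //.
  by rewrite ger0_norm // sumr_ge0.
- under eq_fun do rewrite -sumEFin.
  by apply: integrable_sum => // b _; exact: integrable_abse (intQ b).
Qed.

Section kernels.
Context {R : realType} {S A : finType} {T : nat}.
Variable P : S -> A -> S -> R.
Hypothesis P01 : forall s a s', 0 <= P s a s' <= 1.

Lemma Pl_ge0_le1 (pih : S -> S -> R) (sl : SL S T) (a : A) (y : SL S T) :
  (forall s w, 0 <= pih s w <= 1) -> 0 <= Pl P pih sl a y <= 1.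
Proof.
move: sl y => [[s w] dd] [[s' w'] d'] pih01; rewrite /Pl /Pde.
apply: mulr_ge0_le1; first by apply: mulr_ge0_le1; [exact: natb_ge0_le1|exact: P01].
by case: ifP => _; [exact: natb_ge0_le1|exact: pih01].
Qed.

Lemma seg_weight_ge0_le1 (pil : SL S T -> A -> R) s w st ac :
  (forall sl a, 0 <= pil sl a <= 1) -> 0 <= seg_weight P pil s w st ac <= 1.
Proof.
move=> pil01; apply: mulr_ge0_le1; first exact: natb_ge0_le1.
apply: (big_ind (fun v => 0 <= v <= 1)); [by rewrite ler01 lexx|exact: mulr_ge0_le1|].
by move=> i _; apply: mulr_ge0_le1.
Qed.

Context {d : measure_display} {T0 : measurableType d}.
Context {H : set (set T0)}.
Hypothesis sigmaH : sigma_algebra setT H.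

Lemma meas_wrt_Pl (pih : T0 -> S -> S -> R) (sl : SL S T) (a : A) (y : SL S T) :
  (forall s w, meas_wrt H (fun om => pih om s w)) ->
  meas_wrt H (fun om => Pl P (pih om) sl a y).
Proof.
move: sl y => [[s w] dd] [[s' w'] d'] Hpih; rewrite /Pl.
case: (_ != _); first exact: meas_wrt_cst.
by apply: meas_wrtM => //; exact: meas_wrt_cst.
Qed.

Lemma meas_wrt_seg_weight (pil : T0 -> SL S T -> A -> R) s w st ac :
  (forall sl a, meas_wrt H (fun om => pil om sl a)) ->
  meas_wrt H (fun om => seg_weight P (pil om) s w st ac).
Proof.
move=> Hpil; apply: meas_wrtM => //; first exact: meas_wrt_cst.
apply: meas_wrt_prod => // i; apply: meas_wrtM => //; exact: meas_wrt_cst.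
Qed.

End kernels.

Lemma normr_seg_reward_le {R : realType} {S A : finType} {T : nat}
    (r : S -> A -> R) (rbar gh : R) (st : {ffun 'I_T.+1 -> S}) (ac : {ffun 'I_T -> A}) :
  0 <= gh <= 1 -> (forall s a, `|r s a| <= rbar) ->
  `|seg_reward r gh st ac| <= T%:R * rbar.
Proof.
move=> /andP[gh0 gh1] hr; rewrite /seg_reward (le_trans (ler_norm_sum _ _ _)) //.
have -> : T%:R * rbar = \sum_(k < T) rbar by rewrite sumr_const card_ord mulr_natl.
apply: ler_sum => k _.
rewrite normrM normrX ger0_norm //; apply: le_trans (hr (st (inord k)) (ac k)).
by rewrite ler_piMl // exprn_ile1.
Qed.

Lemma M1_centered {R : realType} {T0 : Type} {S A : finType} {T : nat}
    (P : S -> A -> S -> R) (gl : R) (Ql : nat -> T0 -> SL S T -> A -> R)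
    (pih : nat -> T0 -> S -> S -> R) (nxt : nat -> SL S T -> A -> T0 -> SL S T)
    (n : nat) (sl : SL S T) (a : A) :
  M1 P gl Ql pih nxt n.+1 (sl, a) =
  centered_sample (nxt n sl a) (fun om y => Pl P (pih n om) sl a y)
                  (fun om y => gl * maxQ (Ql n om) y).
Proof.
apply/funext => om; rewrite centered_sampleE /= mulr_sumr.
by congr (_ - _); apply: eq_bigr => y _; rewrite mulrCA.
Qed.

Section segments.
Context {R : realType} {S A : finType} {T : nat}.
Variables (P : S -> A -> S -> R) (pil : SL S T -> A -> R) (s w : S).
Local Notation seg := ({ffun 'I_T.+1 -> S} * {ffun 'I_T -> A})%type.

Lemma sum_Ph_mul (g : S -> R) :
  \sum_s' Ph P pil s w s' * g s' =
  \sum_(sa : seg) seg_weight P pil s w sa.1 sa.2 * g (sa.1 (inord T)).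
Proof.
rewrite -(pair_bigA _ (fun st ac => seg_weight P pil s w st ac * g (st (inord T)))) /=.
under eq_bigr do rewrite /Ph mulr_suml; rewrite exchange_big; apply: eq_bigr => st _.
under eq_bigr do rewrite mulr_suml; rewrite exchange_big; apply: eq_bigr => ac _.
rewrite -(sum_pred1_natrM (st (inord T)) g) mulr_sumr.
by apply: eq_bigr => s' _; rewrite mulrA.
Qed.

Lemma rhE (r : S -> A -> R) (gh : R) :
  rh P r gh pil s w =
  \sum_(sa : seg) seg_weight P pil s w sa.1 sa.2 * seg_reward r gh sa.1 sa.2.
Proof.
by rewrite /rh -(pair_bigA _ (fun st ac => seg_weight P pil s w st ac * seg_reward r gh st ac)).
Qed.

End segments.

Lemma M2_centered {R : realType} {T0 : Type} {S A : finType} {T : nat}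
    (P : S -> A -> S -> R) (r : S -> A -> R) (gh : R)
    (Qh : nat -> T0 -> S -> S -> R) (pil : nat -> T0 -> SL S T -> A -> R)
    (segS : nat -> S -> S -> T0 -> {ffun 'I_T.+1 -> S})
    (segA : nat -> S -> S -> T0 -> {ffun 'I_T -> A}) (n : nat) (s w : S) :
  M2 P r gh Qh pil segS segA n.+1 (s, w) =
  centered_sample (fun om => (segS n s w om, segA n s w om))
    (fun om sa => seg_weight P (pil n om) s w sa.1 sa.2)
    (fun om sa => gh ^+ T * maxQ (Qh n om) (sa.1 (inord T)) + seg_reward r gh sa.1 sa.2).
Proof.
apply/funext => om; rewrite centered_sampleE /= sum_Ph_mul rhE.
under [in RHS]eq_bigr do rewrite mulrDr mulrCA.
rewrite big_split /= -mulr_sumr; ring.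
Qed.

Section feudal_noise.
Variables (R : realType) (S A : finType) (T : nat).
Variable P : S -> A -> S -> R.
Hypotheses (hP0 : forall s a s', 0 <= P s a s')
  (hP1 : forall s a, \sum_(s' : S) P s a s' = 1).
Variables (r : S -> A -> R) (rbar : R).
Hypothesis hr : forall s a, `|r s a| <= rbar.
Variables (gh gl : R).
Hypotheses (hgh : 0 < gh < 1) (hgl : 0 < gl < 1).
Variables (d : measure_display) (T0 : measurableType d) (Pr : probability T0 R).
Variable G : nat -> set (set T0).
Hypotheses (hGs : forall n, sigma_algebra setT (G n))
  (hGm : forall n, G n `<=` measurable) (hGinc : forall n, G n `<=` G n.+1).
Variables (Ql : nat -> T0 -> SL S T -> A -> R) (Qh : nat -> T0 -> S -> S -> R).
Hypotheses (hQlG : forall n sl a, meas_wrt (G n) (fun om => Ql n om sl a))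
  (hQhG : forall n s w, meas_wrt (G n) (fun om => Qh n om s w))
  (hQli : forall n sl a, Pr.-integrable setT (fun om => (Ql n om sl a)%:E))
  (hQhi : forall n s w, Pr.-integrable setT (fun om => (Qh n om s w)%:E)).
Variables (pih : nat -> T0 -> S -> S -> R) (pil : nat -> T0 -> SL S T -> A -> R).
Hypotheses (hpih0 : forall n om s w, 0 <= pih n om s w)
  (hpih1 : forall n om s, \sum_(w : S) pih n om s w = 1)
  (hpil0 : forall n om sl a, 0 <= pil n om sl a)
  (hpil1 : forall n om sl, \sum_(a : A) pil n om sl a = 1)
  (hpihm : forall n s w, meas_wrt (gen_sigma (xy_comp (Ql n) (Qh n)))
                                  (fun om => pih n om s w))
  (hpilm : forall n sl a, meas_wrt (gen_sigma (xy_comp (Ql n) (Qh n)))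
                                   (fun om => pil n om sl a)).
Variables (nxt : nat -> SL S T -> A -> T0 -> SL S T)
  (segS : nat -> S -> S -> T0 -> {ffun 'I_T.+1 -> S})
  (segA : nat -> S -> S -> T0 -> {ffun 'I_T -> A}).
Hypotheses (hnxtG : forall n sl a y, G n.+1 [set om | nxt n sl a om = y])
  (hsegG : forall n s w st ac,
      G n.+1 [set om | segS n s w om = st /\ segA n s w om = ac])
  (hnxtL : forall n sl a y B, G n B ->
      (Pr (B `&` [set om | nxt n sl a om = y])
       = \int[Pr]_(om in B) (Pl P (pih n om) sl a y)%:E)%E)
  (hsegL : forall n s w st ac B, G n B ->
      (Pr (B `&` [set om | segS n s w om = st /\ segA n s w om = ac])
       = \int[Pr]_(om in B) (seg_weight P (pil n om) s w st ac)%:E)%E).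

Local Notation M1n := (M1 P gl Ql pih nxt).
Local Notation M2n := (M2 P r gh Qh pil segS segA).
Local Notation F := (filtF Ql Qh M1n M2n).
Local Notation sqnorm1 n om := (1 + \sum_(sl : SL S T) \sum_(a : A) (Ql n om sl a) ^+ 2
                                   + \sum_(s : S) \sum_(w : S) (Qh n om s w) ^+ 2).
Local Notation seg := ({ffun 'I_T.+1 -> S} * {ffun 'I_T -> A})%type.

Let G_mono m n : (m <= n)%N -> G m `<=` G n.
Proof.
elim: n => [|n IH]; first by rewrite leqn0 => /eqP ->.
by rewrite leq_eqVlt => /orP[/eqP -> //|/IH GmGn C /GmGn]; exact: hGinc.
Qed.

Let P01 s a s' : 0 <= P s a s' <= 1.
Proof. by rewrite hP0 -(hP1 s a); apply: ler_term_sum. Qed.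

Let pih01 n om s w : 0 <= pih n om s w <= 1.
Proof. by rewrite hpih0 -(hpih1 n om s); apply: ler_term_sum. Qed.

Let pil01 n om sl a : 0 <= pil n om sl a <= 1.
Proof. by rewrite hpil0 -(hpil1 n om sl); apply: ler_term_sum. Qed.

Let xy_sigma_sub n : gen_sigma (xy_comp (Ql n) (Qh n)) `<=` G n.
Proof. by apply: gen_sigma_sub => // -[[sl a]|[s w]]; [exact: hQlG|exact: hQhG]. Qed.

Let meas_wrt_Pl_G n (sl : SL S T) (a : A) (y : SL S T) :
  meas_wrt (G n) (fun om => Pl P (pih n om) sl a y).
Proof. by apply: meas_wrt_Pl => // s w; exact: meas_wrtS (xy_sigma_sub n) (hpihm n s w). Qed.

Let meas_wrt_seg_weight_G n s w (st : {ffun 'I_T.+1 -> S}) (ac : {ffun 'I_T -> A}) :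
  meas_wrt (G n) (fun om => seg_weight P (pil n om) s w st ac).
Proof.
by apply: meas_wrt_seg_weight => // sl a; exact: meas_wrtS (xy_sigma_sub n) (hpilm n sl a).
Qed.

Let meas_wrt_target1 n (y : SL S T) : meas_wrt (G n) (fun om => gl * maxQ (Ql n om) y).
Proof. by apply: meas_wrtM => //; [exact: meas_wrt_cst|exact: meas_wrt_maxQ]. Qed.

Let meas_wrt_target2 n (sa : seg) :
  meas_wrt (G n)
    (fun om => gh ^+ T * maxQ (Qh n om) (sa.1 (inord T)) + seg_reward r gh sa.1 sa.2).
Proof.
apply: meas_wrtD => //; last exact: meas_wrt_cst.
by apply: meas_wrtM => //; [exact: meas_wrt_cst|exact: meas_wrt_maxQ].
Qed.

Lemma M1_cond_mean_zero n sl a : cond_mean_zero Pr (G n) (M1n n.+1 (sl, a)).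
Proof.
rewrite M1_centered; apply: (centered_sample_cond_mean_zero (hGs n) (hGm n)).
- by move=> y; apply: hGm; exact: hnxtG.
- exact: hnxtL.
- exact: meas_wrt_Pl_G.
- by move=> om y; apply: Pl_ge0_le1.
- exact: meas_wrt_target1.
- move=> y; under eq_fun do rewrite EFinM.
  by apply: integrableZl => //; apply: integrable_maxQ (hGs n) (hGm n) _ _.
Qed.

Lemma M2_cond_mean_zero n s w : cond_mean_zero Pr (G n) (M2n n.+1 (s, w)).
Proof.
rewrite M2_centered; apply: (centered_sample_cond_mean_zero (hGs n) (hGm n)).
- by move=> [st ac]; rewrite set_pair_eqE; apply: hGm; exact: hsegG.
- by move=> [st ac] B HB; rewrite set_pair_eqE; exact: hsegL.
- by move=> sa; exact: meas_wrt_seg_weight_G.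
- by move=> om sa; apply: seg_weight_ge0_le1.
- exact: meas_wrt_target2.
- move=> sa; under eq_fun do rewrite EFinD EFinM.
  apply: integrableD => //; last exact: finite_measure_integrable_cst.
  by apply: integrableZl => //; apply: integrable_maxQ (hGs n) (hGm n) _ _.
Qed.

Lemma meas_wrt_M1 n i : meas_wrt (G n) (M1n n i).
Proof.
case: n => [|n]; first exact: meas_wrt_cst.
case: i => sl a; rewrite M1_centered; apply: meas_wrt_centered_sample => // y.
- exact: meas_wrtS (hGinc n) (meas_wrt_Pl_G n sl a y).
- exact: meas_wrtS (hGinc n) (meas_wrt_target1 n y).
Qed.

Lemma meas_wrt_M2 n i : meas_wrt (G n) (M2n n i).
Proof.
case: n => [|n]; first exact: meas_wrt_cst.
case: i => s w; rewrite M2_centered; apply: meas_wrt_centered_sample => // -[st ac].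
- by rewrite set_pair_eqE.
- exact: meas_wrtS (hGinc n) (meas_wrt_seg_weight_G n s w st ac).
- exact: meas_wrtS (hGinc n) (meas_wrt_target2 n (st, ac)).
Qed.

Lemma filtF_sub n : F n `<=` G n.
Proof.
apply: gen_sigma_sub => // -[m [[[sl a]|[s w]]|[i|i]]] /=;
  apply: (meas_wrtS (G_mono m n (ltnSE (ltn_ord m)))).
- exact: hQlG.
- exact: hQhG.
- exact: meas_wrt_M1.
- exact: meas_wrt_M2.
Qed.

Lemma M1_mart_diff i : mart_diff Pr F (fun n => M1n n i).
Proof.
move=> n; split; first exact: (meas_wrt_gen_sigma _ (ord_max, inr (inl i))).
by case: i => sl a; apply: cond_mean_zeroS (filtF_sub n) (M1_cond_mean_zero n sl a).
Qed.

Lemma M2_mart_diff i : mart_diff Pr F (fun n => M2n n i).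
Proof.
move=> n; split; first exact: (meas_wrt_gen_sigma _ (ord_max, inr (inr i))).
by case: i => s w; apply: cond_mean_zeroS (filtF_sub n) (M2_cond_mean_zero n s w).
Qed.

Let sqnorm1_ge1 n om : 1 <= sqnorm1 n om.
Proof. by rewrite -addrA lerDl addr_ge0 ?sum2_sqr_ge0. Qed.

Let meas_wrt_sqnorm1 n : meas_wrt (G n) (fun om => sqnorm1 n om).
Proof.
have meas_wrt_sqr (f : T0 -> R) : meas_wrt (G n) f -> meas_wrt (G n) (fun om => f om ^+ 2).
  by move=> Hf; apply: meas_wrtM.
apply: meas_wrtD => //; first apply: meas_wrtD => //; first exact: meas_wrt_cst.
- by do 2!(apply: meas_wrt_sum => // ?); exact/meas_wrt_sqr/hQlG.
- by do 2!(apply: meas_wrt_sum => // ?); exact/meas_wrt_sqr/hQhG.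
Qed.

Let sqr_target1_le n om (y : SL S T) :
  (gl * maxQ (Ql n om) y) ^+ 2 <= 1 * sqnorm1 n om.
Proof.
have gl2_le1 : gl ^+ 2 <= 1 by case/andP: hgl => gl0 gl1; rewrite expr_le1 // ltW.
rewrite mul1r exprMn; apply: le_trans (ler_piMl (sqr_ge0 _) gl2_le1) _.
apply: le_trans (maxQ_sqr_le_sum2 _ _) _.
by have := sum2_sqr_ge0 (Qh n om); lra.
Qed.

Let sqr_target2_le n om (sa : seg) :
  (gh ^+ T * maxQ (Qh n om) (sa.1 (inord T)) + seg_reward r gh sa.1 sa.2) ^+ 2
  <= 2 * (1 + (T%:R * rbar) ^+ 2) * sqnorm1 n om.
Proof.
set m := maxQ _ _; set b := seg_reward _ _ _ _; set c := (T%:R * rbar) ^+ 2.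
have a2_le : (gh ^+ T * m) ^+ 2 <= \sum_s \sum_w Qh n om s w ^+ 2.
  have ghT2_le1 : (gh ^+ T) ^+ 2 <= 1.
    by case/andP: hgh => gh0 gh1; rewrite -exprM exprn_ile1 // ltW.
  rewrite exprMn; apply: le_trans (ler_piMl (sqr_ge0 _) ghT2_le1) _.
  exact: maxQ_sqr_le_sum2.
have b2_le : b ^+ 2 <= c.
  have b_le : `|b| <= T%:R * rbar.
    by apply: normr_seg_reward_le => //; case/andP: hgh => gh0 gh1; rewrite !ltW.
  by rewrite -(real_normK (num_real b)) ler_pXn2r ?nnegrE // (le_trans _ b_le).
have sqrD_le : (gh ^+ T * m + b) ^+ 2 <= 2 * ((gh ^+ T * m) ^+ 2 + b ^+ 2).
  by have := sqr_ge0 (gh ^+ T * m - b); rewrite sqrrB sqrrD; lra.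
have cV_ge : c <= c * sqnorm1 n om.
  by rewrite ler_peMr ?sqr_ge0 ?sqnorm1_ge1.
have := sum2_sqr_ge0 (Ql n om); lra.
Qed.

Definition M1_sqr_bound : R := (#|{: SL S T * A}| * #|{: SL S T}| ^ 2).+1%:R.

Definition M2_sqr_bound : R :=
  (#|{: S * S}| * #|{: seg}| ^ 2)%:R * (2 * (1 + (T%:R * rbar) ^+ 2)) + 1.

Lemma M1_sqr_bound_gt0 : 0 < M1_sqr_bound.
Proof. exact: ltr0Sn. Qed.

Lemma M2_sqr_bound_gt0 : 0 < M2_sqr_bound.
Proof. by rewrite ltr_pwDr // !mulr_ge0 // addr_ge0 // sqr_ge0. Qed.

Lemma M1_cond_sqr_le n : cond_le Pr (F n)
  (fun om => \sum_(i : SL S T * A) (M1n n.+1 i om) ^+ 2)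
  (fun om => M1_sqr_bound * sqnorm1 n om).
Proof.
apply: cond_le_of_le.
- by move=> C /filtF_sub; exact: hGm.
- apply: (meas_wrt_measurable_fun (hGm n.+1)); apply: meas_wrt_sum => // i.
  by apply: meas_wrtM => //; exact: meas_wrt_M1.
- by apply: (meas_wrt_measurable_fun (hGm n)); apply: meas_wrtM => //; exact: meas_wrt_cst.
- by move=> om; apply: sumr_ge0 => i _; exact: sqr_ge0.
move=> om; have V_gt0 : 0 < sqnorm1 n om by apply: lt_le_trans (sqnorm1_ge1 n om).
apply: (@le_trans _ _ (\sum_(i : SL S T * A) (#|{: SL S T}| ^ 2)%:R * 1 * sqnorm1 n om)).
  apply: ler_sum => -[sl a] _; rewrite M1_centered.
  by apply: sqr_centered_sample_le => y; [exact: Pl_ge0_le1 | exact: sqr_target1_le].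
rewrite sumr_const mulr1 -mulrnAl ler_pM2r // -mulrnA ler_nat mulnC.
exact: leqW.
Qed.

Lemma M2_cond_sqr_le n : cond_le Pr (F n)
  (fun om => \sum_(i : S * S) (M2n n.+1 i om) ^+ 2)
  (fun om => M2_sqr_bound * sqnorm1 n om).
Proof.
apply: cond_le_of_le.
- by move=> C /filtF_sub; exact: hGm.
- apply: (meas_wrt_measurable_fun (hGm n.+1)); apply: meas_wrt_sum => // i.
  by apply: meas_wrtM => //; exact: meas_wrt_M2.
- by apply: (meas_wrt_measurable_fun (hGm n)); apply: meas_wrtM => //; exact: meas_wrt_cst.
- by move=> om; apply: sumr_ge0 => i _; exact: sqr_ge0.
move=> om; have V_gt0 : 0 < sqnorm1 n om by apply: lt_le_trans (sqnorm1_ge1 n om).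
set c := 2 * (1 + (T%:R * rbar) ^+ 2).
apply: (@le_trans _ _ (\sum_(i : S * S) (#|{: seg}| ^ 2)%:R * c * sqnorm1 n om)).
  apply: ler_sum => -[s w] _; rewrite M2_centered.
  by apply: sqr_centered_sample_le => sa; [exact: seg_weight_ge0_le1 | exact: sqr_target2_le].
by rewrite sumr_const -mulrnAl ler_pM2r // -mulrnAl -mulrnA mulnC lerDl ler01.
Qed.

End feudal_noise.

Theorem lemma5
  (R : realType) (S A : finType) (T : nat) (hT : (0 < T)%N)
  (* MDP: kernel P(s'|s,a) = P s a s', bounded reward r *)
  (P : S -> A -> S -> R)
  (hP0 : forall s a s', 0 <= P s a s')
  (hP1 : forall s a, \sum_(s' : S) P s a s' = 1)
  (r : S -> A -> R) (rbar : R) (hr : forall s a, `|r s a| <= rbar)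
  (gh gl : R) (hgh : 0 < gh < 1) (hgl : 0 < gl < 1)
  (* probability space and the history filtration G_n of the sampling *)
  (d : measure_display) (T0 : measurableType d) (Pr : probability T0 R)
  (G : nat -> set (set T0))
  (hGs : forall n, sigma_algebra setT (G n))
  (hGm : forall n, G n `<=` measurable)
  (hGinc : forall n, G n `<=` G n.+1)
  (* iterates Q^{l,n} (x_n) and Q^{h,n} (y_n): adapted and integrable *)
  (Ql : nat -> T0 -> SL S T -> A -> R) (Qh : nat -> T0 -> S -> S -> R)
  (hQlG : forall n sl a, meas_wrt (G n) (fun om => Ql n om sl a))
  (hQhG : forall n s w, meas_wrt (G n) (fun om => Qh n om s w))
  (hQli : forall n sl a, Pr.-integrable setT (fun om => (Ql n om sl a)%:E))
  (hQhi : forall n s w, Pr.-integrable setT (fun om => (Qh n om s w)%:E))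
  (* policies pi^{h,n}(w|s) = pih n om s w, pi^{l,n}(a|s^l) = pil n om s^l a:
     stochastic and determined by the current iterates (x_n, y_n) *)
  (pih : nat -> T0 -> S -> S -> R) (pil : nat -> T0 -> SL S T -> A -> R)
  (hpih0 : forall n om s w, 0 <= pih n om s w)
  (hpih1 : forall n om s, \sum_(w : S) pih n om s w = 1)
  (hpil0 : forall n om sl a, 0 <= pil n om sl a)
  (hpil1 : forall n om sl, \sum_(a : A) pil n om sl a = 1)
  (hpihm : forall n s w, meas_wrt (gen_sigma (xy_comp (Ql n) (Qh n)))
                                  (fun om => pih n om s w))
  (hpilm : forall n sl a, meas_wrt (gen_sigma (xy_comp (Ql n) (Qh n)))
                                   (fun om => pil n om sl a))
  (* on-policy samples used at step n+1:
     nxt n s^l a ~ P^l_{pi^{h,n}}(. | s^l, a);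
     (segS n s w, segA n s w) = (s_{tT}, ..., s_{(t+1)T}; a_{tT}, ..., a_{tT+T-1}),
     the segment started at s with goal w, low-level policy pi^{l,n} *)
  (nxt : nat -> SL S T -> A -> T0 -> SL S T)
  (segS : nat -> S -> S -> T0 -> {ffun 'I_T.+1 -> S})
  (segA : nat -> S -> S -> T0 -> {ffun 'I_T -> A})
  (hnxtG : forall n sl a y, G n.+1 [set om | nxt n sl a om = y])
  (hsegG : forall n s w st ac,
      G n.+1 [set om | segS n s w om = st /\ segA n s w om = ac])
  (hnxtL : forall n sl a y B, G n B ->
      (Pr (B `&` [set om | nxt n sl a om = y])
       = \int[Pr]_(om in B) (Pl P (pih n om) sl a y)%:E)%E)
  (hsegL : forall n s w st ac B, G n B ->
      (Pr (B `&` [set om | segS n s w om = st /\ segA n s w om = ac])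
       = \int[Pr]_(om in B) (seg_weight P (pil n om) s w st ac)%:E)%E) :
  let M1n := M1 P gl Ql pih nxt in
  let M2n := M2 P r gh Qh pil segS segA in
  let F := filtF Ql Qh M1n M2n in
  let nx2 := fun n om => \sum_(sl : SL S T) \sum_(a : A) (Ql n om sl a) ^+ 2 in
  let ny2 := fun n om => \sum_(s : S) \sum_(w : S) (Qh n om s w) ^+ 2 in
  (forall i, mart_diff Pr F (fun n => M1n n i)) /\
  (forall i, mart_diff Pr F (fun n => M2n n i)) /\
  exists K1 K2 : R, 0 < K1 /\ 0 < K2 /\
    forall n : nat,
      cond_le Pr (F n) (fun om => \sum_(i : SL S T * A) (M1n n.+1 i om) ^+ 2)
                       (fun om => K1 * (1 + nx2 n om + ny2 n om)) /\
      cond_le Pr (F n) (fun om => \sum_(i : S * S) (M2n n.+1 i om) ^+ 2)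
                       (fun om => K2 * (1 + nx2 n om + ny2 n om)).
Proof.
move=> M1n M2n F nx2 ny2.
split; first by move=> i; apply: M1_mart_diff.
split; first by move=> i; apply: M2_mart_diff.
exists (M1_sqr_bound R S A T), (M2_sqr_bound R S A T rbar).
split; first exact: M1_sqr_bound_gt0.
split; first exact: M2_sqr_bound_gt0.
by move=> n; split; [apply: M1_cond_sqr_le | apply: M2_cond_sqr_le].
Qed.
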